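(* Let $g\in G$ and suppose that $\mathbb{G}(\overline{\mathbb{Q}}\cap\mathbb{R})\cap gMg^{-1}$ is infinite. Then there exists $g'\in\mathbb{G}(\overline{\mathbb{Q}}\cap\mathbb{R})$ such that $g\in g'HM$.
   Context: $\mathbb{G}=\mathrm{SO}(Q)$, $Q=2x_0x_1+x_2^2+x_3^2+x_4^2$, realized as $g$ with $g\,\mathrm{diag}(J,I_3)g^T=\mathrm{diag}(J,I_3)$, $J=\begin{pmatrix}0&1\\1&0\end{pmatrix}$; $G=\mathbb{G}(\mathbb{R})\cong\mathrm{SO}(1,4)$. $M=\{\mathrm{diag}(\epsilon I_2,m):\epsilon=\pm1,m\in\mathrm{SO}(3)\}$. $H\cong\mathrm{SO}(1,2)$ is the subgroup of $G$ acting trivially on the coordinates $x_2,x_3$ (i.e. the special isometry group of $2x_0x_1+x_4^2$ on the coordinates $x_0,x_1,x_4$, extended by the identity on $x_2,x_3$). $\overline{\mathbb{Q}}$ is the algebraic closure of $\mathbb{Q}$ in $\mathbb{C}$. *)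

From HB Require Import structures.
From mathcomp Require Import all_boot all_order all_algebra.
From mathcomp Require Import Rstruct.
Set Implicit Arguments. Unset Strict Implicit. Unset Printing Implicit Defensive.
Import Order.TTheory GRing.Theory Num.Theory.
Local Open Scope ring_scope.

(* Gram matrix of Q = 2 x0 x1 + x2^2 + x3^2 + x4^2, i.e. diag(J, I_3). *)
Definition Smat : 'M[Rdefinitions.R]_5 :=
  \matrix_(i < 5, j < 5)
    if ((i == 0 :> nat) && (j == 1 :> nat)) || ((i == 1 :> nat) && (j == 0 :> nat))
       || (leq 2 i && (i == j)) then 1 else 0.

Definition inG (g : 'M[Rdefinitions.R]_5) : Prop :=
  g *m Smat *m g^T = Smat /\ \det g = 1.

Definition real_algebraic (x : Rdefinitions.R) : Prop :=
  exists p : {poly rat}, p != 0 /\ root (map_poly ratr p) x.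

Definition inGalg (g : 'M[Rdefinitions.R]_5) : Prop :=
  inG g /\ forall i j, real_algebraic (g i j).

Definition inM (m : 'M[Rdefinitions.R]_5) : Prop :=
  exists (eps : Rdefinitions.R) (m3 : 'M[Rdefinitions.R]_3),
    (eps = 1 \/ eps = -1) /\ m3 *m m3^T = 1%:M /\ \det m3 = 1 /\
    m = block_mx (eps%:M : 'M[Rdefinitions.R]_2) 0 0 m3.

(* H = elements of G acting trivially on the coordinates x2, x3 *)
Definition inH (h : 'M[Rdefinitions.R]_5) : Prop :=
  inG h /\ forall i j : 'I_5,
    (nat_of_ord i \in [:: 2%N; 3%N]) || (nat_of_ord j \in [:: 2%N; 3%N]) -> h i j = (i == j)%:R.

Definition infinite_mxset (P : 'M[Rdefinitions.R]_5 -> Prop) : Prop :=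
  ~ exists s : seq 'M[Rdefinitions.R]_5, forall x, P x -> x \in s.

(* Among three distinct elements of G(Qbar ∩ R) ∩ gMg^-1 two have the same sign eps, so
   x - y = g diag(0, a - b) g^-1 with a != b in SO(3) is real algebraic.  A difference of two
   orthogonal matrices with equal determinants never has rank one; hence the real algebraic
   columns of x - y span at least a plane in the positive definite space g(0 ⊕ R^3), and
   Gram–Schmidt, which only needs square roots, gives a Q-orthonormal real algebraic pair
   e = g p, f = g q in it.  Products of reflections in real algebraic vectors give r in
   G(Qbar ∩ R) with r e = e_2 and r f = e_3.  Completing p, q to m3 in SO(3) by the cross
   product, h = r g diag(1, m3) fixes e_2 and e_3, so h is in H and g = r^-1 h diag(1, m3^T). *)

From HB Require Import structures.
From mathcomp Require Import all_boot all_order all_algebra.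
From mathcomp Require Import Rstruct.
From mathcomp Require Import ring.
From Stdlib Require Import Classical.
Import Order.TTheory GRing.Theory Num.Theory.
Local Open Scope ring_scope.
Set Implicit Arguments. Unset Strict Implicit.

Notation RR := Rdefinitions.R.
Notation ralg := real_algebraic.

(** * Real algebraic numbers *)

Lemma ralgE x : ralg x <-> algebraicOver (@ratr RR) x.
Proof. by split=> [[p [? ?]]|[p ? ?]]; exists p. Qed.

Lemma ralg0 : ralg 0. Proof. exact/ralgE/algebraic0. Qed.

Lemma ralg_nat n : ralg n%:R.
Proof. by have /ralgE := @algebraic_id _ _ (@ratr RR) n%:R; rewrite rmorph_nat. Qed.

Lemma ralgN x : ralg x -> ralg (- x).
Proof. by move/ralgE/algebraic_opp/ralgE. Qed.

Lemma ralgD x y : ralg x -> ralg y -> ralg (x + y).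
Proof. by move=> /ralgE ? /ralgE ?; apply/ralgE/algebraic_add. Qed.

Lemma ralgM x y : ralg x -> ralg y -> ralg (x * y).
Proof. by move=> /ralgE ? /ralgE ?; apply/ralgE/algebraic_mul. Qed.

Lemma ralgV x : ralg x -> ralg x^-1.
Proof. by move/ralgE/algebraic_inv/ralgE. Qed.

Lemma ralg_sum n (F : 'I_n -> RR) : (forall i, ralg (F i)) -> ralg (\sum_i F i).
Proof. by move=> algF; apply: big_ind => //; [exact: ralg0 | exact: ralgD]. Qed.

(* If [p(x) = 0] then [(p o X^2)(sqrt x) = 0]; for [x < 0] the square root is [0]. *)
Lemma ralg_sqrt x : ralg x -> ralg (Num.sqrt x).
Proof.
have [x_ge0|x_lt0] := lerP 0 x; last by rewrite ltr0_sqrtr // => _; exact: ralg0.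
case=> p [p_neq0 px]; exists (p \Po 'X^2); split.
  by rewrite comp_poly_eq0 // size_polyXn.
by rewrite /root map_comp_poly horner_comp map_polyXn hornerXn sqr_sqrtr.
Qed.

Definition ralg_mx m n (A : 'M[RR]_(m, n)) := forall i j, ralg (A i j).

Lemma ralg_mxM m n p (A : 'M_(m, n)) (B : 'M_(n, p)) :
  ralg_mx A -> ralg_mx B -> ralg_mx (A *m B).
Proof. by move=> algA algB i j; rewrite mxE; apply: ralg_sum => k; apply: ralgM. Qed.

Lemma ralg_mxD m n (A B : 'M_(m, n)) : ralg_mx A -> ralg_mx B -> ralg_mx (A + B).
Proof. by move=> algA algB i j; rewrite mxE; apply: ralgD. Qed.

Lemma ralg_mxB m n (A B : 'M_(m, n)) : ralg_mx A -> ralg_mx B -> ralg_mx (A - B).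
Proof. by move=> algA algB i j; rewrite !mxE; apply/ralgD/ralgN. Qed.

Lemma ralg_mxZ m n c (A : 'M_(m, n)) : ralg c -> ralg_mx A -> ralg_mx (c *: A).
Proof. by move=> algc algA i j; rewrite mxE; apply: ralgM. Qed.

Lemma ralg_mx_tr m n (A : 'M_(m, n)) : ralg_mx A -> ralg_mx A^T.
Proof. by move=> algA i j; rewrite mxE. Qed.

Lemma ralg_mx_col m n j (A : 'M_(m, n)) : ralg_mx A -> ralg_mx (col j A).
Proof. by move=> algA i k; rewrite mxE. Qed.

Lemma ralg_mx_nat m n (A : 'M[RR]_(m, n)) : (forall i j, exists k, A i j = k%:R) -> ralg_mx A.
Proof. by move=> natA i j; have [k ->] := natA i j; exact: ralg_nat. Qed.

Lemma ralg_mx1 n : ralg_mx (1%:M : 'M_n).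
Proof. by apply: ralg_mx_nat => i j; rewrite mxE; exists (i == j). Qed.

(** * Bilinear forms and orthonormal pairs *)

Lemma det_add1_mul (R : comPzRingType) n (z : 'cV[R]_n) (y : 'rV[R]_n) :
  \det (1%:M + z *m y) = 1 + (y *m z) 0 0.
Proof.
have lhs : block_mx 1%:M (- z) 0 1%:M *m block_mx (1%:M + z *m y) 0 y 1%:M
           = block_mx 1%:M (- z) y (1%:M : 'M_1).
  by rewrite mulmx_block !mul1mx !mulmx1 ?mul0mx ?mulmx0 ?addr0 ?add0r mulNmx addrK.
have rhs : block_mx 1%:M 0 y 1%:M *m block_mx 1%:M (- z) 0 (1%:M + y *m z)
           = block_mx 1%:M (- z) y (1%:M : 'M_1).
  by rewrite mulmx_block !mul1mx !mulmx1 ?mul0mx ?mulmx0 ?addr0 ?add0r mulmxN addrCA addNr addr0.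
have := congr1 determinant lhs; rewrite -rhs !det_mulmx.
rewrite !det_ublock !det_lblock !det1 !mul1r !mulr1 => ->.
by rewrite det_mx11 !mxE.
Qed.

Section MatrixForm.
Variables (R : comPzRingType) (n : nat) (A : 'M[R]_n).

Definition mxform (u v : 'cV[R]_n) := (u^T *m A *m v) 0 0.

Lemma mxformDl u v w : mxform (u + v) w = mxform u w + mxform v w.
Proof. by rewrite /mxform linearD /= !mulmxDl mxE. Qed.

Lemma mxformDr u v w : mxform u (v + w) = mxform u v + mxform u w.
Proof. by rewrite /mxform mulmxDr mxE. Qed.

Lemma mxformZl c u v : mxform (c *: u) v = c * mxform u v.
Proof. by rewrite /mxform linearZ /= -!scalemxAl mxE. Qed.

Lemma mxformZr u c v : mxform u (c *: v) = c * mxform u v.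
Proof. by rewrite /mxform -scalemxAr mxE. Qed.

Lemma mxformNl u v : mxform (- u) v = - mxform u v.
Proof. by rewrite -scaleN1r mxformZl mulN1r. Qed.

Lemma mxformNr u v : mxform u (- v) = - mxform u v.
Proof. by rewrite -scaleN1r mxformZr mulN1r. Qed.

Lemma mxformBl u v w : mxform (u - v) w = mxform u w - mxform v w.
Proof. by rewrite mxformDl mxformNl. Qed.

Lemma mxformBr u v w : mxform u (v - w) = mxform u v - mxform u w.
Proof. by rewrite mxformDr mxformNr. Qed.

Lemma mxformC : A^T = A -> forall u v, mxform u v = mxform v u.
Proof.
move=> symA u v; rewrite /mxform; transitivity ((v^T *m A *m u)^T 0 0); last by rewrite mxE.
by rewrite !trmx_mul trmxK symA mulmxA.
Qed.

Lemma mxform_mulmx o u v : o^T *m A *m o = A -> mxform (o *m u) (o *m v) = mxform u v.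
Proof. by move=> oAo; rewrite /mxform trmx_mul -!mulmxA (mulmxA o^T) (mulmxA _ o) oAo !mulmxA. Qed.

End MatrixForm.

Notation dot := (mxform 1%:M).

Lemma dot_eq0 (R : realDomainType) n (z : 'cV[R]_n) : (dot z z == 0) = (z == 0).
Proof.
apply/eqP/eqP => [|->]; last by rewrite /mxform !mulmx0 mxE.
rewrite /mxform mulmx1 mxE => /eqP.
rewrite psumr_eq0 => [/allP z0|k _]; last by rewrite !mxE -expr2 sqr_ge0.
apply/matrixP => i j; rewrite (ord1 j) mxE.
by have := z0 i (mem_index_enum _); rewrite /= mxE mulf_eq0 orbb => /eqP.
Qed.

Lemma dot_gt0 (R : realDomainType) n (z : 'cV[R]_n) : z != 0 -> 0 < dot z z.
Proof.
rewrite -dot_eq0 lt_def => ->; rewrite /mxform mulmx1 mxE.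
by apply: sumr_ge0 => k _; rewrite !mxE -expr2 sqr_ge0.
Qed.

(* With [t = b^T a = 1 + z' y], [det t = 1] forces [y z' = 0], so [t z' = z'];
   as [t] is orthogonal also [t^T z' = z'], i.e. [|z'|^2 y^T = 0]. *)
Lemma orthogonal_eq_of_sub_rank1 (R : realFieldType) n (a b : 'M[R]_n)
    (z : 'cV_n) (y : 'rV_n) :
  a *m a^T = 1%:M -> b *m b^T = 1%:M -> \det a = \det b -> a - b = z *m y -> a = b.
Proof.
move=> aaT bbT dab ab_zy.
have aTa : a^T *m a = 1%:M by apply: mulmx1C.
have bTb : b^T *m b = 1%:M by apply: mulmx1C.
pose z' := b^T *m z; pose t := b^T *m a.
have t_rank1 : t = 1%:M + z' *m y.
  by rewrite /t /z' -mulmxA -ab_zy mulmxBr bTb addrC subrK.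
have det_t : \det t = 1.
  by rewrite det_mulmx dab -det_mulmx bTb det1.
have yz' : y *m z' = 0.
  have yz'0 : (y *m z') 0 0 = 0.
    by apply: (@addrI _ 1); rewrite addr0 -det_add1_mul -t_rank1 det_t.
  by rewrite [y *m z']mx11_scalar yz'0 raddf0.
have tz' : t *m z' = z' by rewrite t_rank1 mulmxDl mul1mx -mulmxA yz' mulmx0 addr0.
have tTt : t^T *m t = 1%:M.
  by rewrite /t trmx_mul trmxK mulmxA -(mulmxA a^T) bbT mulmx1 aTa.
have tTz' : t^T *m z' = z' by rewrite -{1}tz' mulmxA tTt mul1mx.
have yT_dot : dot z' z' *: y^T = 0.
  move: tTz'; rewrite t_rank1 linearD /= trmx1 trmx_mul mulmxDl mul1mx -mulmxA.
  rewrite {1}[z'^T *m z']mx11_scalar mul_mx_scalar /mxform mulmx1.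
  by move=> /(canRL (addKr z')); rewrite addNr.
suff t1 : t = 1%:M by rewrite -[a]mul1mx -bbT -mulmxA -/t t1 mulmx1.
rewrite t_rank1; have [/eqP|dot_neq0] := eqVneq (dot z' z') 0.
  by rewrite dot_eq0 => /eqP->; rewrite mul0mx addr0.
have /eqP : y^T = 0 by rewrite -(scale1r y^T) -(mulVf dot_neq0) -scalerA yT_dot scaler0.
by rewrite -trmx0 => /eqP/trmx_inj->; rewrite mulmx0 addr0.
Qed.

Lemma exists_independent_cols (F : fieldType) m n (X : 'M[F]_(m, n)) :
  (forall (z : 'cV_m) (y : 'rV_n), X <> z *m y) ->
  exists j k, col j X != 0 /\ forall c, col k X != c *: col j X.
Proof.
move=> not_rank1; have [j colj_neq0|cols0] := pickP (fun j => col j X != 0); last first.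
  exfalso; apply: (not_rank1 0 0); rewrite mul0mx; apply/matrixP => i k.
  by have /negbFE/eqP/matrixP/(_ i 0) := cols0 k; rewrite !mxE.
exists j; apply: NNPP => no_k.
have /fin_all_exists [c Xc] : forall k, exists c, col k X = c *: col j X.
  move=> k; apply: NNPP => not_prop; apply: no_k; exists k; split => // c.
  by apply/eqP => Xk; apply: not_prop; exists c.
apply: (not_rank1 (col j X) (\row_k c k)); apply/matrixP => i k.
by have /matrixP/(_ i 0) := Xc k; rewrite !mxE big_ord1 !mxE mulrC.
Qed.

Lemma dsubmx_invmx_mul_rsubmx (F : fieldType) m n (g : 'M[F]_(m + n)) :
  g \in unitmx -> dsubmx (invmx g) *m rsubmx g = 1%:M.
Proof.
move=> g_unit; have := mulVmx g_unit; set gi := invmx g.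
rewrite -[gi]vsubmxK -[g]hsubmxK mul_col_row (scalar_mx_block m n).
by case/eq_block_mx => _ _ _; rewrite col_mxKd row_mxKr.
Qed.

Definition normalize (R : rcfType) n (u : 'cV[R]_n) := (Num.sqrt (dot u u))^-1 *: u.

Lemma dot_normalize (R : rcfType) n (u : 'cV[R]_n) :
  u != 0 -> dot (normalize u) (normalize u) = 1.
Proof.
move=> u_neq0; have uu_gt0 := dot_gt0 u_neq0.
rewrite mxformZl mxformZr -{3}(sqr_sqrtr (ltW uu_gt0)); field.
by rewrite sqrtr_eq0 -ltNge.
Qed.

Section GramSchmidt.
Variables (n : nat) (P : 'cV[RR]_n -> Prop).
Hypothesis PB : forall u v, P u -> P v -> P (u - v).
Hypothesis PZ : forall c u, ralg c -> P u -> P (c *: u).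
Hypothesis P_dot : forall u v, P u -> P v -> ralg (dot u v).

Lemma P_normalize u : P u -> P (normalize u).
Proof. by move=> Pu; apply/PZ/Pu/ralgV/ralg_sqrt/P_dot. Qed.

Lemma gram_schmidt2 z w : P z -> P w -> z != 0 -> (forall c, w != c *: z) ->
  exists p q, [/\ P p, P q, dot p p = 1, dot q q = 1 & dot p q = 0].
Proof.
move=> Pz Pw z_neq0 w_indep.
pose w' := w - (dot z w / dot z z) *: z.
have w'_neq0 : w' != 0 by rewrite subr_eq0.
have zw' : dot z w' = 0 by rewrite mxformBr mxformZr divfK ?subrr // dot_eq0.
have Pw' : P w' by apply/PB/PZ => //; apply/ralgM/ralgV/P_dot/Pz/Pz/P_dot.
exists (normalize z), (normalize w'); split; rewrite ?dot_normalize //; try exact: P_normalize.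
by rewrite mxformZl mxformZr zw' !mulr0.
Qed.

End GramSchmidt.

Section SO3Completion.
Variable R : comNzRingType.

Definition cross_frame (p0 p1 p2 q0 q1 q2 : R) : 'M[R]_3 :=
  \matrix_(i < 3, j < 3)
    nth 0 (nth [::] [:: [:: p0; q0; p1 * q2 - p2 * q1];
                       [:: p1; q1; p2 * q0 - p0 * q2];
                       [:: p2; q2; p0 * q1 - p1 * q0]] i) j.

Let sum3 (F : 'I_3 -> R) : \sum_(k < 3) F k = F 0 + F 1 + F 2.
Proof. by rewrite !big_ord_recr big_ord0 /= add0r; congr (F _ + F _ + F _); apply: val_inj. Qed.

Lemma orthonormal_pair_to_SO3 (p q : 'cV[R]_3) :
  dot p p = 1 -> dot q q = 1 -> dot p q = 0 ->
  exists m : 'M[R]_3, [/\ m *m m^T = 1%:M, \det m = 1,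
    m *m delta_mx 0 0 = p & m *m delta_mx 1 0 = q].
Proof.
rewrite /mxform !mulmx1 !mxE !sum3 !mxE => pp qq pq.
set p0 := p 0 0; set p1 := p 1 0; set p2 := p 2 0.
set q0 := q 0 0; set q1 := q 1 0; set q2 := q 2 0.
have cross_norm : (p1 * q2 - p2 * q1) ^+ 2 + (p2 * q0 - p0 * q2) ^+ 2
                  + (p0 * q1 - p1 * q0) ^+ 2 = 1.
  have -> : (p1 * q2 - p2 * q1) ^+ 2 + (p2 * q0 - p0 * q2) ^+ 2 + (p0 * q1 - p1 * q0) ^+ 2
      = (p0 * p0 + p1 * p1 + p2 * p2) * (q0 * q0 + q1 * q1 + q2 * q2)
        - (p0 * q0 + p1 * q1 + p2 * q2) ^+ 2 by ring.
  by rewrite pp qq pq; ring.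
pose m := cross_frame p0 p1 p2 q0 q1 q2.
have mTm : m^T *m m = 1%:M.
  apply/matrixP => i j; rewrite !mxE sum3 !mxE /=.
  case: i => [[|[|[|?]]] ?] //; case: j => [[|[|[|?]]] ?] //=;
    first [ring | rewrite -pp; ring | rewrite -qq; ring | rewrite -cross_norm; ring
          | by transitivity (p0 * q0 + p1 * q1 + p2 * q2); [ring | exact: pq]].
exists m; split.
- exact: mulmx1C.
- rewrite -cross_norm (expand_det_row _ 0) !big_ord_recr big_ord0 /= /cofactor.
  rewrite !(expand_det_row _ 0) !big_ord_recr !big_ord0 /= /cofactor !det_mx11 !mxE /=.
  ring.
- apply/matrixP => i j; rewrite (ord1 j) -colE !mxE.
  by case: i => [[|[|[|?]]] ?] //=; congr (p _ 0); apply: val_inj.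
- apply/matrixP => i j; rewrite (ord1 j) -colE !mxE.
  by case: i => [[|[|[|?]]] ?] //=; congr (q _ 0); apply: val_inj.
Qed.

End SO3Completion.

(** * The form Q and its orthogonal group *)

Definition J2 : 'M[RR]_2 := \matrix_(i, j) (i != j :> nat)%:R.

Lemma Smat_block : Smat = block_mx J2 0 0 1%:M.
Proof.
apply/matrixP => i j; rewrite /Smat /J2 !mxE.
case: (@splitP 2 3 i) => i' Ei; rewrite ?mxE;
  case: (@splitP 2 3 j) => j' Ej; rewrite !mxE -val_eqE /= Ei Ej.
- by case: i' {Ei} => [[|[|?]] ?] //; case: j' {Ej} => [[|[|?]] ?].
- by case: i' {Ei} => [[|[|?]] ?] //; case: j' {Ej} => [[|[|[|?]]] ?].
- by case: i' {Ei} => [[|[|[|?]]] ?] //; case: j' {Ej} => [[|[|?]] ?].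
- by case: i' {Ei} => [[|[|[|?]]] ?] //; case: j' {Ej} => [[|[|[|?]]] ?].
Qed.

Lemma Smat_tr : Smat^T = Smat.
Proof.
apply/matrixP => i j; rewrite !mxE.
by case: i => [[|[|[|[|[|?]]]]] ?] //; case: j => [[|[|[|[|[|?]]]]] ?].
Qed.

Lemma Smat_sqr : Smat *m Smat = 1%:M.
Proof.
have J2_sqr : J2 *m J2 = 1%:M.
  apply/matrixP => i j; rewrite !mxE !big_ord_recr big_ord0 /= !mxE.
  by case: i => [[|[|?]] ?] //; case: j => [[|[|?]] ?] //=; rewrite ?mulr0 ?mulr1 ?add0r ?addr0.
change (@mulmx _ (2 + 3) (2 + 3) (2 + 3) Smat Smat = 1%:M).
rewrite Smat_block mulmx_block J2_sqr !mulmx0 !mul0mx !mulmx1 !addr0 !add0r.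
by rewrite (scalar_mx_block 2 3).
Qed.

Lemma det_Smat : \det Smat = -1.
Proof.
change (\det (Smat : 'M_(2 + 3)) = -1).
rewrite Smat_block det_ublock det1 mulr1 (expand_det_row _ 0) !big_ord_recr big_ord0 /=.
by rewrite /cofactor !mxE /= !det_mx11 !mxE /= !mul0r ?mulr0 !add0r mul1r expr1 mulr1.
Qed.

Lemma ralg_Smat : ralg_mx Smat.
Proof. by apply: ralg_mx_nat => i j; rewrite mxE; case: ifP; [exists 1%N | exists 0%N]. Qed.

Notation qform := (mxform Smat).

Lemma qformC u v : qform u v = qform v u.
Proof. exact/mxformC/Smat_tr. Qed.

Lemma ralg_qform u v : ralg_mx u -> ralg_mx v -> ralg (qform u v).
Proof. by move=> algu algv; apply/ralg_mxM/algv/ralg_mxM/ralg_Smat/ralg_mx_tr. Qed.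

Definition inOQ (o : 'M[RR]_5) := o *m Smat *m o^T = Smat.

Lemma OQ_mulmx_inv o : inOQ o -> o *m (Smat *m o^T *m Smat) = 1%:M.
Proof. by move=> Oo; rewrite !mulmxA Oo Smat_sqr. Qed.

Lemma OQ_unit o : inOQ o -> o \in unitmx.
Proof. by move/OQ_mulmx_inv/mulmx1_unit => []. Qed.

Lemma invmx_OQ o : inOQ o -> invmx o = Smat *m o^T *m Smat.
Proof.
move=> Oo; rewrite -[RHS](mulKmx (OQ_unit Oo)).
by rewrite (OQ_mulmx_inv Oo) mulmx1.
Qed.

Lemma OQ_trmx_form o : inOQ o -> o^T *m Smat *m o = Smat.
Proof.
move=> Oo; have /(congr1 (mulmx Smat)) := mulmx1C (OQ_mulmx_inv Oo).
by rewrite !mulmxA Smat_sqr mul1mx mulmx1.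
Qed.

Lemma OQ_mul o1 o2 : inOQ o1 -> inOQ o2 -> inOQ (o1 *m o2).
Proof.
move=> O1 O2; rewrite /inOQ trmx_mul -!mulmxA (mulmxA o2) (mulmxA _ o2^T) O2.
by rewrite mulmxA O1.
Qed.

Lemma OQ_tr o : inOQ o -> inOQ o^T.
Proof. by move=> Oo; rewrite /inOQ trmxK OQ_trmx_form. Qed.

Lemma OQ_inv o : inOQ o -> inOQ (invmx o).
Proof.
move=> Oo; rewrite (invmx_OQ Oo) /inOQ !trmx_mul Smat_tr trmxK.
rewrite -!mulmxA (mulmxA Smat Smat) Smat_sqr mul1mx (mulmxA o^T) (mulmxA _ o).
by rewrite OQ_trmx_form // mulmxA Smat_sqr mul1mx.
Qed.

Lemma ralg_invmx_OQ o : inOQ o -> ralg_mx o -> ralg_mx (invmx o).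
Proof.
by move=> Oo algo; rewrite invmx_OQ //; apply/ralg_mxM/ralg_Smat/ralg_mxM/ralg_mx_tr/algo/ralg_Smat.
Qed.

Lemma det_OQ o : inOQ o -> \det o = 1 \/ \det o = -1.
Proof.
move=> /(congr1 determinant); rewrite !det_mulmx det_tr det_Smat => Edet.
have /eqP : \det o ^+ 2 = 1 by rewrite -[RHS]opprK -Edet; ring.
by rewrite sqrf_eq1 => /orP[] /eqP; [left|right].
Qed.

Lemma qform_OQ o u v : inOQ o -> qform (o *m u) (o *m v) = qform u v.
Proof. by move=> /OQ_trmx_form; apply: mxform_mulmx. Qed.

Lemma OQ_of_qform o : (forall u v, qform (o *m u) (o *m v) = qform u v) -> inOQ o.
Proof.
move=> oQ; suff oSo : o^T *m Smat *m o = Smat.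
  by have := @OQ_tr o^T; rewrite /inOQ !trmxK; apply.
have entry (A : 'M[RR]_5) i j : A i j = mxform A (delta_mx i 0) (delta_mx j 0).
  by rewrite /mxform -mulmxA -colE trmx_delta -rowE !mxE.
apply/matrixP => i j; rewrite entry [RHS]entry -oQ.
by rewrite /mxform trmx_mul !mulmxA.
Qed.

Definition reflQ (v : 'cV[RR]_5) : 'M[RR]_5 := 1%:M - (2 / qform v v) *: (v *m (v^T *m Smat)).

Lemma reflQ_apply v x : reflQ v *m x = x - (2 / qform v v * qform v x) *: v.
Proof.
rewrite /reflQ mulmxBl mul1mx -scalemxAl -!mulmxA (mulmxA v^T).
by rewrite [v^T *m Smat *m x]mx11_scalar mul_mx_scalar scalerA.
Qed.

Lemma reflQ_OQ v : qform v v != 0 -> inOQ (reflQ v).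
Proof.
move=> vv_neq0; apply: OQ_of_qform => x y; rewrite !reflQ_apply.
by rewrite !(mxformBl, mxformBr, mxformZl, mxformZr) (qformC x v); field.
Qed.

Lemma reflQ_fix v z : qform v z = 0 -> reflQ v *m z = z.
Proof. by move=> vz; rewrite reflQ_apply vz mulr0 scale0r subr0. Qed.

Lemma det_reflQ v : qform v v != 0 -> \det (reflQ v) = -1.
Proof.
move=> vv_neq0.
have -> : reflQ v = 1%:M + (- (2 / qform v v) *: v) *m (v^T *m Smat).
  by rewrite /reflQ -scalemxAl scaleNr.
by rewrite det_add1_mul -scalemxAr mxE -/(qform v v); field.
Qed.

Lemma ralg_reflQ v : ralg_mx v -> ralg_mx (reflQ v).
Proof.
move=> algv; apply/ralg_mxB/ralg_mxZ; first exact: ralg_mx1.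
  by apply/ralgM/ralgV/ralg_qform/algv/algv/ralg_nat.
by apply/ralg_mxM/ralg_mxM/ralg_Smat/ralg_mx_tr.
Qed.

(* Reflect in [x - y] when it is anisotropic; otherwise [Q(x + y) = 4 Q(x) - Q(x - y)]
   is nonzero and reflecting in [x + y], then in [y], does the job. *)
Lemma OQ_move_vector x y : ralg_mx x -> ralg_mx y -> qform x x = qform y y -> qform x x != 0 ->
  exists o, [/\ ralg_mx o, inOQ o, o *m x = y &
    forall z, qform x z = 0 -> qform y z = 0 -> o *m z = z].
Proof.
move=> algx algy Exy xx_neq0.
have Qsub : qform (x - y) (x - y) = 2 * (qform x x - qform x y).
  by rewrite !(mxformBl, mxformBr) (qformC y x) -Exy; ring.
have Qadd : qform (x + y) (x + y) = 2 * (qform x x + qform x y).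
  by rewrite !(mxformDl, mxformDr) (qformC y x) -Exy; ring.
have two_neq0 : (2 : RR) != 0 by rewrite pnatr_eq0.
have [sub_iso|sub_aniso] := eqVneq (qform (x - y) (x - y)) 0; last first.
  exists (reflQ (x - y)); split.
  - exact/ralg_reflQ/ralg_mxB.
  - exact: reflQ_OQ.
  - rewrite reflQ_apply; have -> : 2 / qform (x - y) (x - y) * qform (x - y) x = 1.
      move: sub_aniso; rewrite Qsub mulf_eq0 negb_or => /andP[_ xxy].
      by rewrite mxformBl (qformC y x); field.
    by rewrite scale1r opprB addrC subrK.
  - by move=> z xz yz; apply: reflQ_fix; rewrite mxformBl xz yz subrr.
have add_aniso : qform x x + qform x y != 0.
  apply: contra xx_neq0 => /eqP xxy; move/eqP: sub_iso.
  rewrite Qsub mulf_eq0 (negPf two_neq0) /= subr_eq0 => /eqP xy.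
  by move: xxy; rewrite -xy -mulr2n => /eqP; rewrite mulrn_eq0.
have yy_neq0 : qform y y != 0 by rewrite -Exy.
exists (reflQ y *m reflQ (x + y)); split.
- exact/ralg_mxM/ralg_reflQ/ralg_mxD/algy/algx/ralg_reflQ.
- by apply: OQ_mul; apply: reflQ_OQ; rewrite ?Qadd ?mulf_neq0.
- rewrite -mulmxA [reflQ (x + y) *m x]reflQ_apply.
  have -> : 2 / qform (x + y) (x + y) * qform (x + y) x = 1.
    by rewrite Qadd mxformDl (qformC y x); field.
  rewrite scale1r opprD addrA subrr add0r reflQ_apply mxformNr.
  have -> : 2 / qform y y * - qform y y = -2 by field.
  by rewrite scaleNr opprK -[2]/(1 + 1) scalerDl scale1r addrA addNr add0r.
- move=> z xz yz; have xyz : qform (x + y) z = 0 by rewrite mxformDl xz yz addr0.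
  by rewrite -mulmxA (reflQ_fix xyz) (reflQ_fix yz).
Qed.

Definition emb (z : 'cV[RR]_3) : 'cV[RR]_5 := col_mx (0 : 'cV_2) z.

Lemma Smat_emb z : Smat *m emb z = emb z.
Proof.
have := mul_block_col J2 0 0 (1%:M : 'M_3) 0 z.
by rewrite !mulmx0 !mul0mx !addr0 add0r mul1mx -Smat_block.
Qed.

Lemma qform_emb z w : qform (emb z) (emb w) = dot z w.
Proof.
rewrite /mxform -mulmxA Smat_emb mulmx1.
have := mul_row_col (0 : 'rV_2) z^T 0 w; rewrite mul0mx add0r -trmx0 -tr_col_mx.
by move->.
Qed.

Lemma embB z w : emb (z - w) = emb z - emb w.
Proof. by apply/matrixP => i j; rewrite !mxE; case: split => k; rewrite !mxE ?subrr. Qed.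

Lemma embZ c z : emb (c *: z) = c *: emb z.
Proof. by apply/matrixP => i j; rewrite !mxE; case: split => k; rewrite !mxE ?mulr0. Qed.

Definition ebasis (k : 'I_3) := emb (delta_mx k 0).

Lemma qform_ebasis k l : qform (ebasis k) (ebasis l) = (k == l)%:R.
Proof. by rewrite qform_emb /mxform mulmx1 trmx_delta mul_delta_mx_cond mulmxnE mxE. Qed.

Lemma ralg_ebasis k : ralg_mx (ebasis k).
Proof.
apply: ralg_mx_nat => i j; rewrite /ebasis /emb mxE.
by case: splitP => l _; rewrite !mxE; [exists 0%N | eexists].
Qed.

Lemma ebasis_delta k : ebasis k = delta_mx (rshift 2 k) 0.
Proof. by rewrite /ebasis /emb delta_mx_dshift. Qed.

(* Move [e] to [ebasis 0], then the image of [f] to [ebasis 1] while fixing [ebasis 0];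
   a reflection in [ebasis 2] corrects the determinant. *)
Lemma SOQ_move_orthonormal_pair e f :
  ralg_mx e -> ralg_mx f -> qform e e = 1 -> qform f f = 1 -> qform e f = 0 ->
  exists r, [/\ ralg_mx r, inOQ r, \det r = 1, r *m e = ebasis 0 & r *m f = ebasis 1].
Proof.
move=> alge algf ee ff ef.
have [o1 [algo1 O1 o1e _]] : exists o, [/\ ralg_mx o, inOQ o, o *m e = ebasis 0 &
    forall z, qform e z = 0 -> qform (ebasis 0) z = 0 -> o *m z = z].
  by apply: OQ_move_vector; rewrite ?ee ?qform_ebasis ?oner_neq0 //; exact: ralg_ebasis.
pose f1 := o1 *m f.
have f1f1 : qform f1 f1 = 1 by rewrite qform_OQ.
have [o2 [algo2 O2 o2f1 o2_fix]] : exists o, [/\ ralg_mx o, inOQ o, o *m f1 = ebasis 1 &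
    forall z, qform f1 z = 0 -> qform (ebasis 1) z = 0 -> o *m z = z].
  apply: OQ_move_vector; rewrite ?f1f1 ?qform_ebasis ?oner_neq0 //.
  - exact: ralg_mxM.
  - exact: ralg_ebasis.
have o2e0 : o2 *m ebasis 0 = ebasis 0.
  by apply: o2_fix; rewrite ?qform_ebasis // -o1e qform_OQ // qformC.
pose r0 := o2 *m o1.
have r0e : r0 *m e = ebasis 0 by rewrite -mulmxA o1e.
have r0f : r0 *m f = ebasis 1 by rewrite -mulmxA o2f1.
have O_r0 : inOQ r0 by apply: OQ_mul.
have alg_r0 : ralg_mx r0 by apply: ralg_mxM.
have [det_r0|det_r0] := det_OQ O_r0; first by exists r0.
have e2_aniso : qform (ebasis 2) (ebasis 2) != 0 by rewrite qform_ebasis eqxx oner_neq0.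
exists (reflQ (ebasis 2) *m r0); split.
- exact/ralg_mxM/alg_r0/ralg_reflQ/ralg_ebasis.
- exact/OQ_mul/O_r0/reflQ_OQ.
- by rewrite det_mulmx det_reflQ // det_r0 mulrNN mulr1.
- by rewrite -mulmxA r0e reflQ_fix // qform_ebasis.
- by rewrite -mulmxA r0f reflQ_fix // qform_ebasis.
Qed.

(** * Conjugates of elements of M *)

Definition blk (e : RR) (a : 'M[RR]_3) : 'M[RR]_5 := block_mx (e%:M : 'M_2) 0 0 a.

Lemma blk_emb e a z : blk e a *m emb z = emb (a *m z).
Proof.
have := mul_block_col (e%:M : 'M_2) 0 0 a 0 z.
by rewrite !mulmx0 !mul0mx !addr0 add0r.
Qed.

Lemma blk_mul e f a b : blk e a *m blk f b = blk (e * f) (a *m b).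
Proof.
have := mulmx_block (e%:M : 'M_2) 0 0 a (f%:M : 'M_2) 0 0 b.
by rewrite !mulmx0 !mul0mx !addr0 !add0r -scalar_mxM.
Qed.

Lemma blk1 : blk 1 1%:M = 1%:M.
Proof. exact: (esym (scalar_mx_block 2 3 1)). Qed.

Lemma det_blk e a : \det (blk e a) = e ^+ 2 * \det a.
Proof. by have := det_ublock (e%:M : 'M_2) 0 a; rewrite det_scalar. Qed.

Lemma blk_OQ e a : e ^+ 2 = 1 -> a *m a^T = 1%:M -> inOQ (blk e a).
Proof.
move=> e2 aaT; rewrite /inOQ.
suff : block_mx (e%:M : 'M_2) 0 0 a *m block_mx J2 0 0 1%:M
         *m (block_mx (e%:M : 'M_2) 0 0 a)^T = block_mx J2 0 0 (1%:M : 'M_3).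
  by rewrite -Smat_block.
rewrite tr_block_mx !trmx0 tr_scalar_mx !mulmx_block ?mulmx0 ?mul0mx ?addr0 ?add0r ?mulmx1 aaT.
rewrite mul_scalar_mx mul_mx_scalar scalerA -expr2 e2 scale1r.
by congr block_mx; apply/matrixP => i j; rewrite !mxE big1 // => k _; rewrite mxE mul0r.
Qed.

Lemma blkB e a b : blk e a - blk e b = blk 0 (a - b).
Proof.
suff : block_mx (e%:M : 'M_2) 0 0 a - block_mx (e%:M : 'M_2) 0 0 b
       = block_mx ((0 : RR)%:M : 'M_2) 0 0 (a - b) by [].
rewrite opp_block_mx add_block_mx !subrr ?oppr0 ?addr0.
by congr block_mx; apply/matrixP => i j; rewrite !mxE ?mul0rn ?mulr0n.
Qed.

Lemma blk0_mulmx c n (A : 'M[RR]_(2 + 3, n)) :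
  blk 0 c *m A = col_mx (0 : 'M_(2, n)) (c *m dsubmx A).
Proof.
have := mul_block_col ((0 : RR)%:M : 'M_2) 0 0 c (usubmx A) (dsubmx A).
by rewrite vsubmxK mul_scalar_mx scale0r !mul0mx !add0r.
Qed.

(* [x - y = g diag(0, a - b) g^-1 = g (0; X)] where [X = (a - b) (g^-1)_down] satisfies
   [a - b = X g_right], so [X] is not of rank one; [g] maps two independent columns of [X],
   put in the last three coordinates, to real algebraic columns of [x - y]. *)
Lemma orthonormal_pair_of_conj_sub g e a b :
  inOQ g -> a *m a^T = 1%:M -> b *m b^T = 1%:M -> \det a = \det b -> a != b ->
  ralg_mx (g *m blk e a *m invmx g - g *m blk e b *m invmx g) ->
  exists p q, [/\ ralg_mx (g *m emb p), ralg_mx (g *m emb q),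
                  dot p p = 1, dot q q = 1 & dot p q = 0].
Proof.
move=> Og aaT bbT dab a_neq_b alg_sub.
have g_unit := OQ_unit Og.
pose X := (a - b) *m dsubmx (invmx g : 'M_(2 + 3, 5)).
have subE : g *m blk e a *m invmx g - g *m blk e b *m invmx g = g *m col_mx (0 : 'M_(2, 5)) X.
  by rewrite -mulmxBl -mulmxBr blkB -mulmxA blk0_mulmx.
have abX : a - b = X *m rsubmx (g : 'M_(5, 2 + 3)).
  by rewrite -mulmxA (@dsubmx_invmx_mul_rsubmx _ 2 3 g) // mulmx1.
have [j [k [Xj_neq0 Xk_indep]]] : exists j k, col j X != 0 /\ forall c, col k X != c *: col j X.
  apply: exists_independent_cols => z y Xzy; move/eqP: a_neq_b; apply.
  apply: (orthogonal_eq_of_sub_rank1 (z := z) (y := y *m rsubmx (g : 'M_(5, 2 + 3)))) => //.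
  by rewrite abX Xzy mulmxA.
have alg_col l : ralg_mx (g *m emb (col l X)).
  have -> : g *m emb (col l X) = col l (g *m col_mx (0 : 'M_(2, 5)) X).
    rewrite [RHS]colE -mulmxA -colE; congr (_ *m _).
    by apply/matrixP => i i0; rewrite !mxE; case: splitP => i' _; rewrite !mxE.
  by rewrite -subE; apply: ralg_mx_col.
apply: (gram_schmidt2 (P := fun z => ralg_mx (g *m emb z))) Xj_neq0 Xk_indep => //.
- by move=> u v algu algv; rewrite embB mulmxBr; apply: ralg_mxB.
- by move=> c u algc algu; rewrite embZ -scalemxAr; apply: ralg_mxZ.
- by move=> u v algu algv; rewrite -qform_emb -(qform_OQ _ _ Og); apply: ralg_qform.
Qed.

(* [h] fixes [e_2, e_3]; so does [h^T = S h^-1 S], which gives the rows. *)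
Lemma inH_of_fix h : inOQ h -> \det h = 1 ->
  h *m ebasis 0 = ebasis 0 -> h *m ebasis 1 = ebasis 1 -> inH h.
Proof.
move=> Oh det_h h0 h1; split; first by [].
have col_fix k : h *m ebasis k = ebasis k -> forall i, h i (rshift 2 k) = (i == rshift 2 k)%:R.
  by move=> hk i; have /matrixP/(_ i 0) := hk; rewrite ebasis_delta -colE !mxE eqxx andbT.
have row_fix k : h *m ebasis k = ebasis k -> forall i, h (rshift 2 k) i = (rshift 2 k == i)%:R.
  move=> hk; have hTk : h^T *m ebasis k = ebasis k.
    have : invmx h *m ebasis k = ebasis k by rewrite -{1}hk mulKmx // OQ_unit.
    rewrite invmx_OQ // -!mulmxA Smat_emb => /(congr1 (mulmx Smat)).
    by rewrite (mulmxA Smat Smat) Smat_sqr mul1mx Smat_emb.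
  by move=> i; have /matrixP/(_ i 0) := hTk; rewrite ebasis_delta -colE !mxE eqxx andbT eq_sym.
have last_two (i : 'I_5) : (nat_of_ord i \in [:: 2%N; 3%N]) -> i = rshift 2 0 \/ i = rshift 2 1.
  by rewrite !inE => /orP[] /eqP Ei; [left|right]; apply: val_inj.
by move=> i j /orP[/last_two|/last_two] [->|->]; rewrite ?row_fix ?col_fix.
Qed.

Definition in_GalgHM (g : 'M[RR]_5) :=
  exists g', inGalg g' /\ exists h m, inH h /\ inM m /\ g = g' *m h *m m.

Lemma GalgHM_of_orthonormal_pair g p q : inG g ->
  ralg_mx (g *m emb p) -> ralg_mx (g *m emb q) -> dot p p = 1 -> dot q q = 1 -> dot p q = 0 ->
  in_GalgHM g.
Proof.
move=> [Og det_g] algp algq pp qq pq.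
have [r [alg_r Or det_r re rf]] : exists r, [/\ ralg_mx r, inOQ r, \det r = 1,
    r *m (g *m emb p) = ebasis 0 & r *m (g *m emb q) = ebasis 1].
  by apply: SOQ_move_orthonormal_pair; rewrite // !qform_OQ // !qform_emb.
have [m3 [m3m3T det_m3 m3e0 m3e1]] := orthonormal_pair_to_SO3 pp qq pq.
exists (invmx r); split.
  split; [split; [exact: OQ_inv | by rewrite det_inv det_r invr1] | exact: ralg_invmx_OQ].
exists (r *m g *m blk 1 m3), (blk 1 m3^T); split; [|split].
- apply: inH_of_fix.
  + by apply/OQ_mul/blk_OQ; rewrite ?expr1n //; exact: OQ_mul.
  + by rewrite !det_mulmx det_r det_g det_blk det_m3 expr1n !mulr1.
  + by rewrite /ebasis -!mulmxA blk_emb m3e0 re.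
  + by rewrite /ebasis -!mulmxA blk_emb m3e1 rf.
- exists 1, m3^T; do ![split] => //; first by left.
    by rewrite trmxK; exact: mulmx1C m3m3T.
  by rewrite det_tr.
- by rewrite -!mulmxA blk_mul mul1r m3m3T blk1 mulmx1 mulmxA mulVmx ?mul1mx // OQ_unit.
Qed.

Lemma GalgHM_of_two_conj g e a b : inG g ->
  a *m a^T = 1%:M -> \det a = 1 -> b *m b^T = 1%:M -> \det b = 1 ->
  inGalg (g *m blk e a *m invmx g) -> inGalg (g *m blk e b *m invmx g) ->
  g *m blk e a *m invmx g <> g *m blk e b *m invmx g -> in_GalgHM g.
Proof.
move=> Gg aaT det_a bbT det_b [_ alg_x] [_ alg_y] x_neq_y.
have a_neq_b : a != b by apply/eqP => ab; apply: x_neq_y; rewrite ab.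
have det_ab : \det a = \det b by rewrite det_a det_b.
have [p [q [algp algq pp qq pq]]] :=
  orthonormal_pair_of_conj_sub Gg.1 aaT bbT det_ab a_neq_b (ralg_mxB alg_x alg_y).
exact: GalgHM_of_orthonormal_pair algp algq pp qq pq.
Qed.

Lemma sign_pigeonhole (e1 e2 e3 : RR) :
  e1 = 1 \/ e1 = -1 -> e2 = 1 \/ e2 = -1 -> e3 = 1 \/ e3 = -1 ->
  [\/ e2 = e1, e3 = e1 | e3 = e2].
Proof. case=> ->; case=> ->; case=> ->; by [constructor 1 | constructor 2 | constructor 3]. Qed.

Unset Implicit Arguments.

Theorem lemma6 (g : 'M[Rdefinitions.R]_5) :
  inG g ->
  infinite_mxset (fun x => inGalg x /\
                    exists m, inM m /\ x = g *m m *m invmx g) ->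
  exists g', inGalg g' /\
    exists h m, inH h /\ inM m /\ g = g' *m h *m m.
Proof.
move=> Gg infinite; pose cj e a := g *m blk e a *m invmx g.
have fresh (s : seq 'M_5) : exists e a, [/\ e = 1 \/ e = -1, a *m a^T = 1%:M, \det a = 1,
                                           inGalg (cj e a) & cj e a \notin s].
  apply: NNPP => none; apply: infinite; exists s.
  move=> x [alg_x [_ [[e [a [he [aaT [det_a ->]]]]] Ex]]]; subst x.
  by apply: contraT => x_notin; exfalso; apply: none; exists e, a.
have [e1 [a1 [he1 aa1 da1 alg1 _]]] := fresh [::].
have [e2 [a2 [he2 aa2 da2 alg2]]] := fresh [:: cj e1 a1].
rewrite mem_seq1 => /eqP x2_neq_x1.
have [e3 [a3 [he3 aa3 da3 alg3]]] := fresh [:: cj e1 a1; cj e2 a2].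
rewrite !inE negb_or => /andP[/eqP x3_neq_x1 /eqP x3_neq_x2].
have [e21|e31|e32] := sign_pigeonhole he1 he2 he3; subst.
- exact: GalgHM_of_two_conj Gg aa2 da2 aa1 da1 alg2 alg1 x2_neq_x1.
- exact: GalgHM_of_two_conj Gg aa3 da3 aa1 da1 alg3 alg1 x3_neq_x1.
- exact: GalgHM_of_two_conj Gg aa3 da3 aa2 da2 alg3 alg2 x3_neq_x2.
Qed.
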